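(* Let $f$ be an extended strategy function for a tree $T=(V,E,w)$, let $v\in V$, and suppose some vertex screens $v$; let $s_{\min}$ be the vertex screening $v$ whose interval $f(s_{\min})$ is minimal (smallest) among all vertices screening $v$. Let $f'$ assign to each vertex $u$ an interval $f'(u)$ with $|f'(u)|\ge w(u)$ such that: (1) $f'(u)=f(u)$ for every $u\notin N(v)$; (2) $f'(u)=f(u)$ for every $u\in N(v)$ that screens $v$; (3) $f'(u)<f(s_{\min})$ for every $u\in N(v)$ that does not screen $v$ (including $u=v$). If the restriction of $f'$ to $N(v)$ is an extended strategy function for the subtree $T[N(v)]$, then $f'$ is an extended strategy function for $T$.
   Context: Intervals are of the form $[a,b)$ with integers $0\le a<b$, $|[a,b)|=b-a$; for $I=[a,b)$, $I'=[a',b')$ write $I>I'$ (equivalently $I'<I$) iff $a\ge b'$. An extended strategy function for a tree $T=(V,E,w)$ is a map $f$ assigning to each vertex $v$ an interval $f(v)$ with $|f(v)|\ge w(v)$, such that for any distinct $v_1,v_2$ with $f(v_1)\cap f(v_2)\ne\emptyset$, the path between $v_1$ and $v_2$ contains a vertex $v_3$ with $f(v_3)>f(v_1)$ and $f(v_3)>f(v_2)$. A vertex $u$ screens $v$ if $f(v)<f(u)$ and $u$ is the only vertex $x$ on the path between $v$ and $u$ with $f(v)<f(x)$; vertices screening $v$ have pairwise disjoint intervals, so there is a unique smallest. The screening neighborhood $N(v)$ is the set of vertices $u$ such that either $u$ screens $v$, or the path between $u$ and $v$ contains no vertex screening $v$ (in particular $v\in N(v)$); $T[N(v)]$ is the subtree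 induced by $N(v)$. *)

From mathcomp Require Import all_boot.
Set Implicit Arguments. Unset Strict Implicit. Unset Printing Implicit Defensive.

(* An interval [a,b) of nonnegative integers is represented by the pair (a,b);
   it is a genuine interval when a < b. *)
Definition ivalid (I : nat * nat) : Prop := I.1 < I.2.
Definition ilen (I : nat * nat) : nat := I.2 - I.1.
Definition igt (I J : nat * nat) : Prop := J.2 <= I.1.
Definition imeet (I J : nat * nat) : Prop :=
  exists x, I.1 <= x < I.2 /\ J.1 <= x < J.2.

Definition is_tree (V : finType) (e : rel V) : Prop :=
  [/\ symmetric e, irreflexive e, (forall u v, connect e u v)
    & ~ (exists c : seq V, [/\ 3 <= size c, uniq c & cycle e c])].

Definition spath (V : finType) (e : rel V) (S : V -> Prop) (u v : V) (p : seq V) : Prop :=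
  [/\ path e u p, last u p = v, uniq (u :: p) & forall x, x \in u :: p -> S x].

Definition on_path (V : finType) (e : rel V) (S : V -> Prop) (u v x : V) : Prop :=
  exists p, spath e S u v p /\ x \in u :: p.

Definition esf_on (V : finType) (e : rel V) (S : V -> Prop) (w : V -> nat)
    (f : V -> nat * nat) : Prop :=
  (forall v, S v -> ivalid (f v) /\ w v <= ilen (f v)) /\
  (forall v1 v2, S v1 -> S v2 -> v1 != v2 -> imeet (f v1) (f v2) ->
     exists v3, [/\ on_path e S v1 v2 v3, igt (f v3) (f v1) & igt (f v3) (f v2)]).

Definition esf (V : finType) (e : rel V) (w : V -> nat) (f : V -> nat * nat) : Prop :=
  esf_on e (fun _ => True) w f.

Definition screens (V : finType) (e : rel V) (f : V -> nat * nat) (v u : V) : Prop :=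
  igt (f u) (f v) /\
  (forall x, on_path e (fun _ => True) v u x -> igt (f x) (f v) -> x = u).

Definition in_N (V : finType) (e : rel V) (f : V -> nat * nat) (v u : V) : Prop :=
  screens e f v u \/
  ~ (exists x, on_path e (fun _ => True) u v x /\ screens e f v x).

From mathcomp Require Import all_boot zify.
From Stdlib Require Import Classical.
Set Implicit Arguments. Unset Strict Implicit. Unset Printing Implicit Defensive.

(* Outside N(v) nothing changes, and inside N(v) the non-screening vertices are moved
   strictly below f(s) for every screen s of v.  Let x, y have meeting f'-intervals.
   If both lie in N(v), the hypothesis on T[N(v)] separates them.  If both lie outside,
   the separator z for f still works unless z was moved; then z is below v, and the
   screen of v on the path from x to v lies between x and z and above both x and y.
   If x is a moved vertex and y lies outside, the screen s of v on the path from y to v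
   lies on the path from y to x and above f'(x); either s separates them itself or the
   separator of s and y for f does. *)

Section TreePaths.
Variables (V : finType) (e : rel V).
Hypothesis e_sym : symmetric e.
Hypothesis e_acyclic : ~ (exists c : seq V, [/\ 3 <= size c, uniq c & cycle e c]).

Local Notation tpath := (on_path e (fun _ => True)).
Local Notation tspath := (spath e (fun _ => True)).

Lemma acyclic_shortcut u a s : e u a -> path e u s -> uniq (u :: s) -> a \in s ->
  a = head a s.
Proof.
move=> Hua Hs Us Has; move: Hs Us; case/splitPr: Has => [[|b r] s2] Hs Us //.
case: e_acyclic; exists [:: a, u, b & r]; split => //.
- suff : uniq (rcons [:: u, b & r] a) by rewrite rcons_uniq.
  rewrite -cats1.
  by move: Us; rewrite -cat_cons -[a :: s2]cat1s catA cat_uniq => /andP[].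
- move: Hs; rewrite /= rcons_path cat_path /= (e_sym a) Hua.
  by case/and4P=> -> -> -> _.
Qed.

Lemma acyclic_path_uniq u p q : path e u p -> path e u q -> last u p = last u q ->
  uniq (u :: p) -> uniq (u :: q) -> p = q.
Proof.
elim: p u q => [|a p IH] u [|b q] //= Hp Hq Hl Up Uq.
- by move: Uq; rewrite {1}Hl mem_last.
- by move: Up; rewrite -Hl mem_last.
case/andP: Hp => Hua Hp; case/andP: Hq => Hub Hq.
have Eab : a = b.
  case: (boolP (a \in b :: q)) => Ha.
    by apply: (acyclic_shortcut Hua _ Uq) => //=; rewrite Hub.
  suff Ep : p = u :: b :: q by move: Up; rewrite Ep /= !inE eqxx !orbT.
  have Hau : a != u by move: Up; rewrite inE eq_sym => /andP[/norP[]].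
  apply: (IH a) => /=; [by [] | by rewrite e_sym Hua Hub | by [] | by case/andP: Up |].
  by rewrite inE negb_or Hau Ha Uq.
subst b; congr cons; apply: (IH a) => //; by [case/andP: Up | case/andP: Uq].
Qed.

Lemma on_path_weaken S u v x : on_path e S u v x -> tpath u v x.
Proof. by case=> p [[Hp Lp Up _] Hx]; exists p. Qed.

Lemma spath_uniq u v p q : tspath u v p -> tspath u v q -> p = q.
Proof.
by case=> Hp Lp Up _ [Hq Lq Uq _]; apply: (acyclic_path_uniq Hp Hq); rewrite ?Lp.
Qed.

Lemma spath_prefix a b p1 x p2 q :
  tspath a b (rcons p1 x ++ p2) -> tspath a x q -> q = rcons p1 x.
Proof.
case=> Hp _ Up _ Hq; apply: (spath_uniq Hq); split => //.
- by move: Hp; rewrite cat_path => /andP[].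
- by rewrite last_rcons.
- by move: Up; rewrite -cat_cons cat_uniq => /andP[].
Qed.

Lemma on_path_sym u v x : tpath u v x -> tpath v u x.
Proof.
case=> p [[Hp Lp Up _] Hx].
have E : rev (u :: p) = v :: rev (belast u p) by rewrite lastI rev_rcons Lp.
exists (rev (belast u p)); split; last by rewrite -E mem_rev.
split => //.
- have := rev_path e u p; rewrite Lp => ->.
  by rewrite (@eq_path _ _ e) // => a b; rewrite e_sym.
- by rewrite -(last_cons u) -E rev_cons last_rcons.
- by rewrite -E rev_uniq.
Qed.

Lemma on_path_trans a b x y : tpath a b x -> tpath a x y -> tpath a b y.
Proof.
case=> p [Hp Hx] [q [Hq Hy]]; exists p; split => //.
move: Hx; rewrite inE => /orP[/eqP Ex | Hx].
  subst x; have Eq : q = [::] by apply: (spath_uniq Hq); split.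
  by move: Hy; rewrite Eq mem_seq1 => /eqP ->; rewrite mem_head.
move: Hp Hq; case/path.splitP: Hx => p1 p2 Hp Hq.
by move: Hy; rewrite (spath_prefix Hp Hq) -cat_cons mem_cat => ->.
Qed.

Hypothesis e_connected : forall u v, connect e u v.

Lemma spath_exists u v : exists p, tspath u v p.
Proof.
have /connectP[p Hp ->] := e_connected u v.
by case: (shortenP Hp) => p' H1 H2 _; exists p'.
Qed.

Lemma on_path_split a b c x : tpath a c x -> tpath a b x \/ tpath b c x.
Proof.
case=> p [Hp Hx].
have [p1 [H1 L1 U1 _]] := spath_exists a b.
have [p2 [H2 L2 U2 _]] := spath_exists b c.
have Hw : path e a (p1 ++ p2) by rewrite cat_path H1 L1 H2.
have : last a (p1 ++ p2) = c by rewrite last_cat L1 L2.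
case: (shortenP Hw) => q Hq Uq Sq Lq.
have Epq : p = q by apply: (spath_uniq Hp); split.
move: Hx; rewrite Epq inE => /orP[/eqP -> | /Sq].
  by left; exists p1; split; rewrite ?inE ?eqxx.
rewrite mem_cat => /orP[H | H]; [left; exists p1 | right; exists p2];
  by split; rewrite ?inE ?H ?orbT.
Qed.

End TreePaths.

Section Intervals.
Implicit Types I J K L : nat * nat.

Lemma igt_trans I J K : ivalid J -> igt I J -> igt J K -> igt I K.
Proof. rewrite /ivalid /igt; lia. Qed.

Lemma igt_irrefl I : ivalid I -> ~ igt I I.
Proof. rewrite /ivalid /igt; lia. Qed.

Lemma igt_trans_nigt I J K L : igt I K -> ~ igt J K -> igt J L -> igt I L.
Proof. rewrite /igt; lia. Qed.

Lemma imeet_sym I J : imeet I J -> imeet J I.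
Proof. by case=> x [H1 H2]; exists x. Qed.

Lemma imeet_nigt I J : imeet I J -> ~ igt J I.
Proof. rewrite /imeet /igt => -[x Hx]; lia. Qed.

Lemma imeet_or_igt I J : ivalid I -> ivalid J -> [\/ imeet I J, igt I J | igt J I].
Proof.
rewrite /ivalid /igt /imeet => HI HJ.
case: (leqP J.2 I.1) => H1; first by constructor 2.
case: (leqP I.2 J.1) => H2; first by constructor 3.
by constructor 1; exists (maxn I.1 J.1); lia.
Qed.

End Intervals.

Section Screening.
Variables (V : finType) (e : rel V) (f : V -> nat * nat) (v : V).
Hypothesis e_sym : symmetric e.
Hypothesis e_acyclic : ~ (exists c : seq V, [/\ 3 <= size c, uniq c & cycle e c]).
Hypothesis e_connected : forall u v, connect e u v.
Hypothesis f_valid : forall x, ivalid (f x).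

Local Notation tpath := (on_path e (fun _ => True)).
Local Notation screens := (screens e f v).
Local Notation in_N := (in_N e f v).

(* The first vertex above v on the path from v to u screens v. *)
Lemma screen_on_path_above u : igt (f u) (f v) -> exists2 s, tpath u v s & screens s.
Proof.
move=> Huv; have [p Hp] := spath_exists e_connected v u.
have Hhas : has (fun x => (f v).2 <= (f x).1) p.
  apply/hasP; exists u => //; case: Hp => _ Lp _ _.
  have := mem_last v p; rewrite Lp inE => /orP[/eqP Eu | //].
  by case: (igt_irrefl (f_valid v)); rewrite -{1}Eu.
case: (split_find Hhas) Hp => s p1 p2 Hs Hp1 Hp; exists s.
  apply: on_path_sym => //; exists (rcons p1 s ++ p2); split => //.
  by rewrite inE mem_cat mem_rcons mem_head orbT.
split => // y [q [Hq Hy]] Hyv.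
move: Hy; rewrite (spath_prefix e_sym e_acyclic Hp Hq) -rcons_cons mem_rcons !inE.
case/or3P=> [/eqP // | /eqP Ey | Hy]; first by subst y; case: (igt_irrefl (f_valid v) Hyv).
by move/hasPn: Hp1 => /(_ y Hy); rewrite Hyv.
Qed.

Lemma inN_nonscreen_below u : in_N u -> ~ screens u -> ~ igt (f u) (f v).
Proof.
case=> // Hfree _ /screen_on_path_above[s Hs Ss].
by apply: Hfree; exists s.
Qed.

Lemma notin_N_screen u : ~ in_N u -> exists2 s, tpath u v s & screens s.
Proof.
move=> Hu; apply: NNPP => Hno; apply: Hu; right => -[s [Hs Ss]].
by apply: Hno; exists s.
Qed.

Lemma inN_screen_on_path u x s :
  in_N u -> ~ screens u -> tpath x v s -> screens s -> tpath x u s.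
Proof.
move=> Hu Hnu Hs Ss; case: (on_path_split e_sym e_acyclic e_connected u Hs) => // Hsu.
by case: Hu => [/Hnu // | []]; exists s.
Qed.

End Screening.

Section Reassembly.
Variables (V : finType) (e : rel V) (w : V -> nat) (f f' : V -> nat * nat).
Variables (v smin : V).
Hypothesis e_sym : symmetric e.
Hypothesis e_acyclic : ~ (exists c : seq V, [/\ 3 <= size c, uniq c & cycle e c]).
Hypothesis e_connected : forall u v, connect e u v.
Hypothesis f_esf : esf e w f.
Hypothesis smin_least : forall s, screens e f v s -> s = smin \/ igt (f s) (f smin).
Hypothesis f'_outside : forall u, ~ in_N e f v u -> f' u = f u.
Hypothesis f'_screens : forall u, in_N e f v u -> screens e f v u -> f' u = f u.
Hypothesis f'_inner : forall u, in_N e f v u -> ~ screens e f v u -> igt (f smin) (f' u).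

Local Notation tpath := (on_path e (fun _ => True)).
Local Notation screens := (screens e f v).
Local Notation in_N := (in_N e f v).
Local Notation separated g x y :=
  (exists z, [/\ tpath x y z, igt (g z) (g x) & igt (g z) (g y)]).

Lemma f_valid x : ivalid (f x).
Proof. by case: (f_esf.1 x I). Qed.

Lemma f_separated x y : x != y -> imeet (f x) (f y) -> separated f x y.
Proof. exact: f_esf.2 x y I I. Qed.

Lemma f'_eq_or_inner u : f' u = f u \/ (in_N u /\ ~ screens u).
Proof.
case: (classic (in_N u)) => Hu; last by left; apply: f'_outside.
case: (classic (screens u)) => Su; [left; exact: f'_screens | by right].
Qed.

Lemma f'_above u : igt (f u) (f v) -> f' u = f u.
Proof.
move=> Huv; case: (f'_eq_or_inner u) => // -[Hu Hnu].
by case: (inN_nonscreen_below e_sym e_acyclic e_connected f_valid Hu Hnu Huv).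
Qed.

Lemma screens_above_inner s u : screens s -> in_N u -> ~ screens u -> igt (f s) (f' u).
Proof.
move=> Ss Hu Hnu; have Hsm := f'_inner Hu Hnu.
by case: (smin_least Ss) => [-> // | Hs]; apply: igt_trans (f_valid smin) Hs Hsm.
Qed.

Lemma separated_screen_outside v1 v2 :
  screens v1 -> ~ in_N v2 -> imeet (f' v1) (f' v2) -> separated f' v1 v2.
Proof.
move=> S1 H2; rewrite f'_screens ?f'_outside //; last by left.
have Hne : v1 != v2 by apply/eqP => E; apply: H2; left; rewrite -E.
case/(f_separated Hne) => v3 [P3 G1 G2].
have E3 := f'_above (igt_trans (f_valid v1) G1 S1.1).
by exists v3; rewrite E3 ?f'_screens ?f'_outside //; left.
Qed.

Lemma separated_inner_outside v1 v2 :
  in_N v1 -> ~ screens v1 -> ~ in_N v2 -> imeet (f' v1) (f' v2) -> separated f' v1 v2.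
Proof.
move=> H1 S1 H2; rewrite (f'_outside H2) => Hm.
have [s Hs Ss] := notin_N_screen H2.
have Hs' := inN_screen_on_path e_sym e_acyclic e_connected H1 S1 Hs Ss.
have G1 := screens_above_inner Ss H1 S1.
have Es : f' s = f s by apply: f'_screens => //; left.
case: (imeet_or_igt (f_valid s) (f_valid v2)) => [Hm2 | G2 | G2].
- have Hne : s != v2 by apply/eqP => E; apply: H2; left; rewrite -E.
  have [y [Py Y1 Y2]] := f_separated Hne Hm2.
  have Ey := f'_above (igt_trans (f_valid s) Y1 Ss.1).
  exists y; rewrite Ey; split => //.
  + exact/on_path_sym/(on_path_trans e_sym e_acyclic Hs')/on_path_sym.
  + exact: igt_trans (f_valid s) Y1 G1.
- by exists s; rewrite Es; split => //; apply: on_path_sym.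
- by case: (imeet_nigt Hm (igt_trans (f_valid s) G2 G1)).
Qed.

Lemma separated_N_outside v1 v2 :
  in_N v1 -> ~ in_N v2 -> imeet (f' v1) (f' v2) -> separated f' v1 v2.
Proof.
move=> H1; case: (classic (screens v1)) => S1.
  exact: separated_screen_outside.
exact: separated_inner_outside.
Qed.

Lemma separated_outside_outside v1 v2 : ~ in_N v1 -> ~ in_N v2 -> v1 != v2 ->
  imeet (f' v1) (f' v2) -> separated f' v1 v2.
Proof.
move=> H1 H2 Hne; rewrite !f'_outside // => /(f_separated Hne)[v3 [P3 G1 G2]].
case: (f'_eq_or_inner v3) => [E3 | [H3 S3]].
  by exists v3; rewrite E3.
have NG := inN_nonscreen_below e_sym e_acyclic e_connected f_valid H3 S3.
have [s Hs Ss] := notin_N_screen H1.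
have Hs' := inN_screen_on_path e_sym e_acyclic e_connected H3 S3 Hs Ss.
exists s; rewrite f'_screens ?f'_outside //; last by left.
split; first exact: (on_path_trans e_sym e_acyclic P3 Hs').
- exact: (igt_trans_nigt Ss.1 NG G1).
- exact: (igt_trans_nigt Ss.1 NG G2).
Qed.

End Reassembly.

Theorem mainTheorem15 (V : finType) (e : rel V) (w : V -> nat)
  (f f' : V -> nat * nat) (v smin : V) :
  is_tree e ->
  esf e w f ->
  screens e f v smin ->
  (forall s, screens e f v s -> s = smin \/ igt (f s) (f smin)) ->
  (forall u, ivalid (f' u) /\ w u <= ilen (f' u)) ->
  (forall u, ~ in_N e f v u -> f' u = f u) ->
  (forall u, in_N e f v u -> screens e f v u -> f' u = f u) ->
  (forall u, in_N e f v u -> ~ screens e f v u -> igt (f smin) (f' u)) ->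
  esf_on e (in_N e f v) w f' ->
  esf e w f'.
Proof.
move=> [e_sym _ e_conn e_acyc] f_esf _ smin_least f'_valid f'_out f'_scr f'_in N_esf.
split=> [u _ | v1 v2 _ _ Hne Hm]; first exact: f'_valid.
have cross := separated_N_outside e_sym e_acyc e_conn f_esf smin_least f'_out f'_scr f'_in.
case: (classic (in_N e f v v1)) => H1; case: (classic (in_N e f v v2)) => H2.
- have [v3 [P3 G1 G2]] := N_esf.2 v1 v2 H1 H2 Hne Hm.
  by exists v3; split => //; apply: on_path_weaken P3.
- exact: cross.
- have [v3 [P3 G1 G2]] := cross v2 v1 H2 H1 (imeet_sym Hm).
  by exists v3; split => //; apply: on_path_sym.
- exact: (separated_outside_outside e_sym e_acyc e_conn f_esf f'_out f'_scr).
Qed.
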